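(* Let $X$ be a real normed linear space and let $x\in X\setminus\{\theta\}$ be $\varepsilon$-smooth with $\varepsilon\in[0,2)$. Suppose $y_1,y_2\in X$ satisfy $\min\{\|y_1\|,\|y_2\|\}\le\left\|\frac{y_1+y_2}{2}\right\|$. If $x\perp_B y_1$ and $x\perp_B y_2$, then $x\perp_B^{\varepsilon/2}(y_1+y_2)$.
   Context: $x\perp_B y$ means $\|x+\lambda y\|\ge\|x\|$ for all $\lambda\in\mathbb{R}$. For $\delta\in[0,1)$, $x\perp_B^\delta y$ means $\|x+\lambda y\|^2\ge\|x\|^2-2\delta\|x\|\|\lambda y\|$ for all $\lambda\in\mathbb{R}$. For $x\neq\theta$, $J(x)=\{f\in S_{X^*}:f(x)=\|x\|\}$, and $x$ is $\varepsilon$-smooth if $\sup_{f,g\in J(x)}\|f-g\|\le\varepsilon$. *)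

From HB Require Import structures.
From mathcomp Require Import all_boot all_order all_algebra.
From mathcomp Require Import all_classical all_reals all_analysis.
Set Implicit Arguments. Unset Strict Implicit. Unset Printing Implicit Defensive.
Import Order.TTheory GRing.Theory Num.Theory.
Import numFieldNormedType.Exports.
Local Open Scope classical_set_scope.
Local Open Scope ring_scope.

Section Defs.
Variables (R : realType) (X : normedModType R).

Definition bdd_linear_functional (f : X -> R) : Prop :=
  (forall (a : R) (u v : X), f (a *: u + v) = a * f u + f v) /\
  exists C : R, forall v : X, `|f v| <= C * `|v|.

Definition dual_norm (f : X -> R) : R :=
  sup [set `|f v| | v in [set v : X | `|v| <= 1]].

Definition supp_funcs (x : X) : set (X -> R) :=
  [set f | bdd_linear_functional f /\ dual_norm f = 1 /\ f x = `|x|].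

Definition eps_smooth (x : X) (eps : R) : Prop :=
  forall f g, supp_funcs x f -> supp_funcs x g ->
    dual_norm (fun v => f v - g v) <= eps.

Definition BJ_orth (x y : X) : Prop :=
  forall lam : R, `|x| <= `|x + lam *: y|.

Definition BJ_orth_approx (delta : R) (x y : X) : Prop :=
  forall lam : R, `|x| ^+ 2 - 2 * delta * `|x| * `|lam *: y| <= `|x + lam *: y| ^+ 2.

End Defs.

From HB Require Import structures.
From mathcomp Require Import all_boot all_order all_algebra.
From mathcomp Require Import all_classical all_reals all_analysis.
From mathcomp Require Import lra ring.
Import Order.TTheory GRing.Theory Num.Theory.
Import numFieldNormedType.Exports.
Local Open Scope classical_set_scope.
Local Open Scope ring_scope.
Set Implicit Arguments. Unset Strict Implicit.

(* By James' characterisation, x _|_B y_i yields a support functional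
   f_i in J(x) with f_i y_i = 0: Hahn-Banach extends a x + b y |-> a ||x||,
   which is dominated by the norm exactly because x _|_B y.  If
   ||y1|| <= ||(y1 + y2) / 2||, then f2 (y1 + y2) = (f2 - f1) y1, so
   eps-smoothness gives |f2 (y1 + y2)| <= eps ||y1|| <= eps/2 ||y1 + y2||.
   Finally any f in J(x) with |f y| <= d ||y|| gives
   ||x + lam y|| >= f (x + lam y) >= ||x|| - d ||lam y||, hence x _|_B^d y. *)

Section SubnormGraph.
Variables (R : realType) (X : normedModType R).

(* Norm-dominated linear functionals on subspaces, encoded by their graphs so
   that a chain of extensions is bounded above by its union. *)
Definition subnorm_graph (G : set (X * R)) :=
  [/\ (forall v a b, G (v, a) -> G (v, b) -> a = b),
      (forall c u a w b, G (u, a) -> G (w, b) -> G (c *: u + w, c * a + b)) &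
      (forall v a, G (v, a) -> a <= `|v|)].

Section Closure.
Variable G : set (X * R).
Hypothesis hG : subnorm_graph G.

Lemma subnorm_graph_fun v a b : G (v, a) -> G (v, b) -> a = b.
Proof. by case: hG => + _ _; apply. Qed.

Lemma subnorm_graph_lin c u a w b :
  G (u, a) -> G (w, b) -> G (c *: u + w, c * a + b).
Proof. by case: hG => _ + _; apply. Qed.

Lemma subnorm_graph_le v a : G (v, a) -> a <= `|v|.
Proof. by case: hG => _ _; apply. Qed.

Lemma subnorm_graphB u a w b : G (u, a) -> G (w, b) -> G (w - u, b - a).
Proof.
move=> Gua Gwb; have := subnorm_graph_lin (-1) Gua Gwb.
by rewrite scaleN1r mulN1r !(addrC (- _)).
Qed.

Lemma subnorm_graph0 u a : G (u, a) -> G (0, 0).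
Proof. by move=> Gua; have := subnorm_graphB Gua Gua; rewrite !subrr. Qed.

Lemma subnorm_graphZ k u a : G (u, a) -> G (k *: u, k * a).
Proof.
by move=> Gua; have := subnorm_graph_lin k Gua (subnorm_graph0 Gua); rewrite !addr0.
Qed.

End Closure.

Section OneStepExtension.
Variables (G : set (X * R)) (v : X).
Hypotheses (hG : subnorm_graph G) (G00 : G (0, 0)) (vNdom : forall r, ~ G (v, r)).

Lemma extension_slope : exists c,
  (forall u a, G (u, a) -> a - `|u - v| <= c) /\
  (forall w b, G (w, b) -> c <= `|w + v| - b).
Proof.
have sep u a w b : G (u, a) -> G (w, b) -> a - `|u - v| <= `|w + v| - b.
  move=> Gua Gwb; have := subnorm_graph_le hG (subnorm_graph_lin hG 1 Gua Gwb).
  rewrite scale1r mul1r.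
  have : `|u + w| <= `|u - v| + `|w + v|.
    by rewrite -[u + w]addr0 -(addNr v) addrACA ler_normD.
  lra.
pose S := [set p.2 - `|p.1 - v| | p in G].
have S_ub : has_ubound S.
  by exists (`|0 + v| - 0) => _ [[u a] Gua <-]; exact: sep Gua G00.
exists (sup S); split.
- by move=> u a Gua; apply: ub_le_sup => //; exists (u, a).
- move=> w b Gwb; apply: ge_sup; first by exists (0 - `|0 - v|), (0, 0).
  by move=> _ [[u a] Gua <-]; exact: sep Gua Gwb.
Qed.

Definition extension_graph (c : R) : set (X * R) :=
  [set p | exists t u a, G (u, a) /\ p = (u + t *: v, a + t * c)].

Lemma extension_graph_fun c w a1 a2 :
  extension_graph c (w, a1) -> extension_graph c (w, a2) -> a1 = a2.
Proof.
move=> [t [u [a [Gua [-> ->]]]]] [t' [u' [a' [Gua' [E ->]]]]].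
have [ett'|tt'] := eqVneq t t'.
  move: E Gua'; rewrite -ett' => /addIr <- Gua'.
  by rewrite (subnorm_graph_fun hG Gua Gua').
exfalso; apply: (@vNdom ((t - t')^-1 * (a' - a))).
have -> : v = (t - t')^-1 *: (u' - u).
  apply: (@scalerI _ _ (t - t')); first by rewrite subr_eq0.
  rewrite scalerA divff ?subr_eq0 // scale1r scalerBl.
  by apply: (addrI u); rewrite addrA E addrK addrC subrK.
exact (subnorm_graphZ hG _ (subnorm_graphB hG Gua Gua')).
Qed.

Lemma extension_graph_lin c k w1 a1 w2 a2 :
  extension_graph c (w1, a1) -> extension_graph c (w2, a2) ->
  extension_graph c (k *: w1 + w2, k * a1 + a2).
Proof.
move=> [t [u [a [Gua [-> ->]]]]] [t' [u' [a' [Gua' [-> ->]]]]].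
exists (k * t + t'), (k *: u + u'), (k * a + a'); split.
  exact: subnorm_graph_lin.
congr pair; last by ring.
by rewrite scalerDr scalerA addrACA -scalerDl.
Qed.

Lemma extension_graph_le c :
  (forall u a, G (u, a) -> a - `|u - v| <= c) ->
  (forall w b, G (w, b) -> c <= `|w + v| - b) ->
  forall w a, extension_graph c (w, a) -> a <= `|w|.
Proof.
move=> c_lb c_ub _ _ [t [u [a [Gua [-> ->]]]]].
have [->|t0] := eqVneq t 0.
  by rewrite scale0r mul0r !addr0; exact (subnorm_graph_le hG Gua).
(* Dividing by t, domination reduces to the upper bound on c at (w, b) when
   t > 0 and to the lower bound at (-w, -b) when t < 0. *)
pose w := t^-1 *: u; pose b := t^-1 * a.
have Gwb : G (w, b) by exact (subnorm_graphZ hG _ Gua).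
have Gwb' : G (- w, - b).
  by have := subnorm_graphZ hG (-1) Gwb; rewrite scaleN1r mulN1r.
have -> : u + t *: v = t *: (w + v) by rewrite scalerDr /w scalerA divff // scale1r.
have -> : a + t * c = t * (b + c) by rewrite mulrDr /b mulrA divff // mul1r.
have := c_ub _ _ Gwb; have := c_lb _ _ Gwb'; rewrite -(opprD w v) normrN normrZ.
by case/orP: (lt_total t0) => ht; [rewrite ltr0_norm | rewrite gtr0_norm]; nra.
Qed.

Lemma subnorm_graph_extension : exists H,
  [/\ subnorm_graph H, G `<=` H & exists r, H (v, r)].
Proof.
have [c [c_lb c_ub]] := extension_slope.
exists (extension_graph c); split.
- split; [exact: extension_graph_fun | exact: extension_graph_lin |].
  exact: extension_graph_le.
- by move=> [u a] Gua; exists 0, u, a; rewrite scale0r mul0r !addr0.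
- by exists c, 1, 0, 0; rewrite scale1r mul1r !add0r.
Qed.

End OneStepExtension.

Lemma subnorm_graph_maximal_total (A : set (X * R)) :
  subnorm_graph A -> A !=set0 ->
  (forall B, subnorm_graph B -> A `<=` B -> B `<=` A) ->
  forall v, exists r, A (v, r).
Proof.
move=> hA [[u a] Aua] Amax v; apply: contrapT => /forallNP vNdom.
have [H [hH AH [r Hvr]]] := subnorm_graph_extension hA (subnorm_graph0 hA Aua) vNdom.
exact: vNdom r (Amax H hH AH _ Hvr).
Qed.

Section HahnBanach.
Variable G0 : set (X * R).
Hypotheses (hG0 : subnorm_graph G0) (G0_neq0 : G0 !=set0).

Lemma subnorm_graph_bigcup (F : set (set (X * R))) :
  (forall G, F G -> subnorm_graph (G `|` G0)) -> total_on F subset ->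
  subnorm_graph ((\bigcup_(G in F) G) `|` G0).
Proof.
move=> hF Ftot; set U := _ `|` G0.
have common p q : U p -> U q -> exists H, [/\ subnorm_graph H, H `<=` U, H p & H q].
  have HU G : F G -> G `|` G0 `<=` U by move=> FG; apply: setSU; exact: bigcup_sup.
  move=> [[G1 FG1 p1]|p0] [[G2 FG2 q2]|q0].
  - have [G12|G21] := Ftot _ _ FG1 FG2.
      by exists (G2 `|` G0); split; [exact: hF | exact: HU | left; exact: G12 | left].
    by exists (G1 `|` G0); split; [exact: hF | exact: HU | left | left; exact: G21].
  - by exists (G1 `|` G0); split; [exact: hF | exact: HU | left | right].
  - by exists (G2 `|` G0); split; [exact: hF | exact: HU | right | left].
  - by exists G0; split; [exact: hG0 | exact: subsetUr | |].
split.
- move=> v a b Uva Uvb; have [H [hH _ Hva Hvb]] := common _ _ Uva Uvb.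
  exact (subnorm_graph_fun hH Hva Hvb).
- move=> c u a w b Uua Uwb; have [H [hH HU Hua Hwb]] := common _ _ Uua Uwb.
  exact (HU _ (subnorm_graph_lin hH c Hua Hwb)).
- move=> v a Uva; have [H [hH _ Hva _]] := common _ _ Uva Uva.
  exact (subnorm_graph_le hH Hva).
Qed.

Lemma subnorm_graph_maximal : exists A, [/\ subnorm_graph A, G0 `<=` A &
  forall B, subnorm_graph B -> A `<=` B -> B `<=` A].
Proof.
(* Zorn runs over the G with [G `|` G0] admissible, so that the empty chain,
   whose union is [set0], is harmless. *)
have [A [hA Amax]] :=
  Zorn_bigcup (P := fun G => subnorm_graph (G `|` G0)) subnorm_graph_bigcup.
have G0A : G0 `<=` A.
  apply: contrapT => G0NA; apply: (Amax (A `|` G0)); last by rewrite -setUA setUid.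
  by split; [exact: subsetUl | move=> AG0A; apply: G0NA => p G0p; apply: AG0A; right].
exists A; split=> //; first by rewrite -(setUidl G0A).
move=> B hB AB; apply: contrapT => BNA; apply: (Amax B) => //.
by rewrite setUidl //; exact: subset_trans G0A AB.
Qed.

Theorem subnorm_graph_hahn_banach : exists f : X -> R,
  [/\ forall k u w, f (k *: u + w) = k * f u + f w,
      forall v, `|f v| <= `|v| & forall v a, G0 (v, a) -> f v = a].
Proof.
have [A [hA G0A Amax]] := subnorm_graph_maximal.
have A_neq0 : A !=set0 by case: G0_neq0 => p G0p; exists p; exact: G0A.
pose f v := xget 0 [set r | A (v, r)].
have Af v : A (v, f v) by exact: xgetPex (subnorm_graph_maximal_total hA A_neq0 Amax v).
exists f; split.
- move=> k u w; apply: (subnorm_graph_fun hA (Af _)).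
  exact (subnorm_graph_lin hA k (Af u) (Af w)).
- move=> v; rewrite ler_norml (subnorm_graph_le hA (Af v)) andbT.
  have := subnorm_graph_le hA (subnorm_graphZ hA (-1) (Af v)).
  rewrite scaleN1r mulN1r normrN; lra.
- by move=> v a G0va; exact (subnorm_graph_fun hA (Af v) (G0A _ G0va)).
Qed.

End HahnBanach.

End SubnormGraph.

Section SupportFunctionals.
Variables (R : realType) (X : normedModType R).

Section LinearFunctional.
Variable f : X -> R.
Hypothesis flin : forall a u v, f (a *: u + v) = a * f u + f v.

Lemma lfun0 : f 0 = 0.
Proof. by have := flin 1 0 0; rewrite scale1r addr0 mul1r; lra. Qed.

Lemma lfunZ a u : f (a *: u) = a * f u.
Proof. by rewrite -[a *: u]addr0 flin lfun0 addr0. Qed.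

Lemma lfunD u v : f (u + v) = f u + f v.
Proof. by have := flin 1 u v; rewrite scale1r mul1r. Qed.

End LinearFunctional.

Lemma le_dual_norm (f : X -> R) : bdd_linear_functional f ->
  forall v, `|f v| <= dual_norm f * `|v|.
Proof.
move=> [flin [C fC]] v.
have [->|v0] := eqVneq v 0; first by rewrite lfun0 // !normr0 mulr0.
have ub : has_ubound [set `|f u| | u in [set u : X | `|u| <= 1]].
  exists `|C| => _ [u u1 <-]; apply: le_trans (fC u) _.
  exact: le_trans (ler_wpM2r (normr_ge0 u) (ler_norm C)) (ler_piMr _ u1).
pose w := `|v|^-1 *: v.
have w1 : `|w| = 1.
  by rewrite normrZ normrV ?unitfE ?normr_eq0 // normr_id mulVf ?normr_eq0.
have -> : f v = `|v| * f w by rewrite -lfunZ // /w scalerA divff ?normr_eq0 // scale1r.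
rewrite normrM normr_id mulrC ler_wpM2r //.
by apply: ub_le_sup => //; exists w; rewrite /= ?w1.
Qed.

Lemma norming_supp_funcs (x : X) (f : X -> R) : x != 0 ->
  (forall a u v, f (a *: u + v) = a * f u + f v) ->
  (forall v, `|f v| <= `|v|) -> f x = `|x| -> supp_funcs x f.
Proof.
move=> x0 flin f_le fx; split; first by split=> //; exists 1 => v; rewrite mul1r.
split=> //; apply/eqP; rewrite eq_le; apply/andP; split.
  apply: ge_sup; first by exists `|f 0|, 0 => //=; rewrite normr0.
  by move=> _ [u u1 <-]; exact: le_trans (f_le u) u1.
have ub : has_ubound [set `|f u| | u in [set u : X | `|u| <= 1]].
  by exists 1 => _ [u u1 <-]; exact: le_trans (f_le u) u1.
apply: ub_le_sup => //; exists (`|x|^-1 *: x).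
  by rewrite /= normrZ normrV ?unitfE ?normr_eq0 // normr_id mulVf ?normr_eq0.
by rewrite lfunZ // fx mulVf ?normr_eq0 // normr1.
Qed.

Lemma supp_funcs_le (x : X) (f : X -> R) :
  supp_funcs x f -> forall v, `|f v| <= `|v|.
Proof. by move=> [bf [nf _]] v; have := le_dual_norm bf v; rewrite nf mul1r. Qed.

Lemma eps_smooth_le (x : X) (eps : R) (f g : X -> R) :
  eps_smooth x eps -> supp_funcs x f -> supp_funcs x g ->
  forall v, `|f v - g v| <= eps * `|v|.
Proof.
move=> sm Jf Jg v.
have fg : bdd_linear_functional (fun v => f v - g v).
  have [[flin _] _] := Jf; have [[glin _] _] := Jg; split.
    by move=> a u w; rewrite flin glin; ring.
  exists 2 => u; have := ler_normB (f u) (g u).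
  by have := supp_funcs_le Jf u; have := supp_funcs_le Jg u; lra.
by apply: le_trans (le_dual_norm fg v) _; rewrite ler_wpM2r // sm.
Qed.

Lemma BJ_orth_approx_supp_funcs (x y : X) (f : X -> R) (d : R) :
  supp_funcs x f -> 0 <= d -> `|f y| <= d * `|y| -> BJ_orth_approx d x y.
Proof.
move=> Jf d0 fy lam; have [[flin _] [_ fx]] := Jf.
have fxy : `|x| + lam * f y <= `|x + lam *: y|.
  rewrite -fx -(lfunZ flin) -lfunD //.
  exact: le_trans (ler_norm _) (supp_funcs_le Jf _).
have fly : `|lam * f y| <= d * `|lam *: y|.
  by rewrite normrM normrZ mulrCA ler_wpM2l.
have dist : `|x| - d * `|lam *: y| <= `|x + lam *: y|.
  by have := ler_norm (- (lam * f y)); rewrite normrN; lra.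
have dD0 : 0 <= d * `|lam *: y| by rewrite mulr_ge0.
have := normr_ge0 x; have [dist0|dist_lt0] := leP 0 (`|x| - d * `|lam *: y|).
  have : (`|x| - d * `|lam *: y|) ^+ 2 <= `|x + lam *: y| ^+ 2.
    by rewrite ler_sqr // nnegrE (le_trans dist0 dist).
  nra.
nra.
Qed.

Section BirkhoffJames.
Variables (x y : X).
Hypotheses (x0 : x != 0) (xy : BJ_orth x y).

Lemma BJ_orth_le_normD a b : a * `|x| <= `|a *: x + b *: y|.
Proof.
have [->|a0] := eqVneq a 0; first by rewrite mul0r.
have -> : a *: x + b *: y = a *: (x + (b / a) *: y).
  by rewrite scalerDr scalerA mulrCA divff // mulr1.
rewrite normrZ; apply: le_trans (ler_wpM2r (normr_ge0 x) (ler_norm a)) _.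
by apply: ler_wpM2l => //; exact: xy.
Qed.

Lemma BJ_orth_span_coordl a b a' b' :
  a *: x + b *: y = a' *: x + b' *: y -> a = a'.
Proof.
have le0 s t s' t' : s *: x + t *: y = s' *: x + t' *: y -> s - s' <= 0.
  move=> E; have := BJ_orth_le_normD (s - s') (t - t').
  by rewrite !scalerBl addrACA -opprD E subrr normr0 pmulr_lle0 ?normr_gt0.
move=> E; apply/eqP; rewrite eq_le -subr_le0 (le0 _ _ _ _ E).
by rewrite -subr_le0 (le0 _ _ _ _ (esym E)).
Qed.

Definition BJ_graph : set (X * R) :=
  [set p | exists a b, p = (a *: x + b *: y, a * `|x|)].

Lemma BJ_graph_subnorm : subnorm_graph BJ_graph.
Proof.
split.
- by move=> _ _ _ [a [b [-> ->]]] [a' [b' [/BJ_orth_span_coordl -> ->]]].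
- move=> c _ _ _ _ [a [b [-> ->]]] [a' [b' [-> ->]]].
  exists (c * a + a'), (c * b + b'); congr pair.
    by rewrite scalerDr !scalerA addrACA -!scalerDl.
  by rewrite mulrDl mulrA.
- by move=> _ _ [a [b [-> ->]]]; exact: BJ_orth_le_normD.
Qed.

Lemma BJ_orth_supp_funcs : exists2 f, supp_funcs x f & f y = 0.
Proof.
have G0 : BJ_graph !=set0 by exists (0, 0), 0, 0; rewrite !scale0r addr0 mul0r.
have [f [flin f_le fG]] := subnorm_graph_hahn_banach BJ_graph_subnorm G0.
exists f; last by apply: fG; exists 0, 1; rewrite scale1r scale0r add0r mul0r.
apply: norming_supp_funcs => //.
by apply: fG; exists 1, 0; rewrite scale1r scale0r addr0 mul1r.
Qed.

End BirkhoffJames.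

Lemma BJ_orth_approx_half_add (x y1 y2 : X) (eps : R) :
  x != 0 -> 0 <= eps -> eps_smooth x eps -> BJ_orth x y1 -> BJ_orth x y2 ->
  `|y1| <= `|(2^-1 : R) *: (y1 + y2)| -> BJ_orth_approx (eps / 2) x (y1 + y2).
Proof.
move=> x0 eps0 sm xy1 xy2.
rewrite normrZ ger0_norm ?invr_ge0 // => y1_le.
have [f1 Jf1 f1y1] := BJ_orth_supp_funcs x0 xy1.
have [f2 Jf2 f2y2] := BJ_orth_supp_funcs x0 xy2.
apply: (BJ_orth_approx_supp_funcs Jf2); first by rewrite divr_ge0.
have [[f2lin _] _] := Jf2.
have -> : f2 (y1 + y2) = f2 y1 - f1 y1 by rewrite lfunD // f2y2 f1y1 !subr0 addr0.
apply: le_trans (eps_smooth_le sm Jf2 Jf1 y1) _.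
by rewrite -mulrA ler_wpM2l.
Qed.

End SupportFunctionals.

Unset Implicit Arguments.
Set Strict Implicit.

Theorem theorem4p6 (R : realType) (X : normedModType R) (x y1 y2 : X) (eps : R) :
  x != 0 -> 0 <= eps -> eps < 2 -> eps_smooth x eps ->
  Num.min `|y1| `|y2| <= `|(2^-1 : R) *: (y1 + y2)| ->
  BJ_orth x y1 -> BJ_orth x y2 ->
  BJ_orth_approx (eps / 2) x (y1 + y2).
Proof.
move=> x0 eps0 _ sm y_min xy1 xy2.
have [y1_le|/ltW y2_le] := leP `|y1| `|y2|.
  by rewrite min_l // in y_min; exact: BJ_orth_approx_half_add.
rewrite min_r // in y_min.
by rewrite addrC; apply: BJ_orth_approx_half_add; rewrite // addrC.
Qed.
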